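(* Consider a credit-attribution game with authors $N=\{1,\dots,n\}$, let $x\in N$, let $p^*\in(0,1]^n$ be baseline reliabilities and let $R\subseteq N\setminus\{x\}$. Let $p$ be obtained from $p^*$ by setting $p_j=0$ for $j\in R$ and $p_j=p^*_j$ otherwise. Then $Sh[\overline{v_{FC}}](x)$ computed with parameters $p$ is at least $Sh[\overline{v_{FC}}](x)$ computed with parameters $p^*$; i.e., no removal attack decreases the Shapley value of $x$ in the full credit game.
   Context: A credit-attribution game has authors $N$ and papers $P_1,\dots,P_m$, each paper $P_k$ with author set $Auth_k\subseteq N$ and weight $w_k\in\mathbb{R}_+$. The full credit game has value $v_{FC}(S)=\sum\{w_k: Auth_k\cap S\ne\emptyset\}$. For $T\subseteq S$, $\Pi_{T,S}=\prod_{i\in T}p_i\prod_{i\in S\setminus T}(1-p_i)$; reliability extension $\overline v(S)=\sum_{T\subseteq S}v(T)\Pi_{T,S}$. Shapley value $Sh[v](x)=\frac1{n!}\sum_\pi[v(S^x_\pi\cup\{x\})-v(S^x_\pi)]$ over permutations $\pi$ of $N$, $S^x_\pi$ the players preceding $x$. *)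

From HB Require Import structures.
From mathcomp Require Import all_boot all_order all_algebra all_fingroup.
Set Implicit Arguments. Unset Strict Implicit. Unset Printing Implicit Defensive.
Import Order.TTheory GRing.Theory Num.Theory.
Local Open Scope ring_scope.

Section CreditGames.
Variables (R : realFieldType) (n m : nat).

Definition v_FC (Auth : 'I_m -> {set 'I_n}) (w : 'I_m -> R) (S : {set 'I_n}) : R :=
  \sum_(k < m | [exists i, (i \in Auth k) && (i \in S)]) w k.

Definition PiTS (p : 'I_n -> R) (T S : {set 'I_n}) : R :=
  (\prod_(i in T) p i) * \prod_(i in S :\: T) (1 - p i).

Definition rel_ext (p : 'I_n -> R) (v : {set 'I_n} -> R) (S : {set 'I_n}) : R :=
  \sum_(T : {set 'I_n} | T \subset S) v T * PiTS p T S.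

(* Players preceding x in the ordering pi (pi maps positions to players). *)
Definition preceding (pi : {perm 'I_n}) (x : 'I_n) : {set 'I_n} :=
  [set y | (pi^-1)%g y < (pi^-1)%g x]%N.

Definition shapley (v : {set 'I_n} -> R) (x : 'I_n) : R :=
  (n`!%:R)^-1 * \sum_(pi : {perm 'I_n}) (v (x |: preceding pi x) - v (preceding pi x)).

End CreditGames.

From HB Require Import structures.
From mathcomp Require Import all_boot all_order all_algebra all_fingroup.
From mathcomp Require Import ring.
Import Order.TTheory GRing.Theory Num.Theory.
Local Open Scope ring_scope.

(** Read [PiTS p T S] as the probability that exactly the members of [T] are
    reliable among [S], each [i] independently with probability [p i]. Then
    [rel_ext p v_FC S] is the expected credit of [S]: each paper [k] contributes
    [w k] times the probability [meet_prob p (Auth k) S] that some author of [k]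
    in [S] is reliable. Adding [x] to [S] raises this probability by
    [p x * prod_(i in S :&: Auth k) (1 - p i)] when [x] is an author of [k], and
    this increment only grows when the reliabilities of the others are lowered.
    Hence every marginal contribution of [x], and so its Shapley value, can only
    grow under a removal attack. *)

Section ReliabilityExtension.
Variables (R : realFieldType) (n : nat).
Implicit Types (p q : 'I_n -> R) (A B S : {set 'I_n}).

Lemma big_PiTS_subset p B S : B \subset S ->
  \sum_(T : {set 'I_n} | T \subset B) PiTS p T S = \prod_(i in S :\: B) (1 - p i).
Proof.
move=> sBS.
(* Expanding [prod_i (F i + G i)] by distributivity, the term indexed by [J]
   vanishes unless [J \subset B], and is then [PiTS p J S]. *)
pose F i := if i \in B then p i else 0.
pose G i := if i \in S then 1 - p i else 1.
transitivity (\prod_i (F i + G i)); last first.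
  rewrite [RHS]big_mkcond; apply: eq_bigr => i _; rewrite /F /G in_setD.
  case: (boolP (i \in B)) => [iB|_]; last by rewrite add0r.
  by rewrite (subsetP sBS _ iB) addrC subrK.
rewrite bigA_distr [LHS]big_mkcond /=; apply: eq_big => // J _.
case: (boolP (J \subset B)) => [sJB|/subsetPn [i iJ iB]]; last first.
  by rewrite (bigD1 i) //= iJ /F (negbTE iB) mul0r.
rewrite /PiTS !(big_mkcond (fun i => i \in _)) -big_split /=.
apply: eq_bigr => i _; rewrite /F /G in_setD.
case: (boolP (i \in J)) => [iJ|_] /=; last by rewrite mul1r.
by rewrite (subsetP sJB _ iJ) mulr1.
Qed.

Lemma big_PiTS p S : \sum_(T : {set 'I_n} | T \subset S) PiTS p T S = 1.
Proof. by rewrite big_PiTS_subset // setDv big_set0. Qed.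

Definition meet_prob p A S : R := 1 - \prod_(i in S :&: A) (1 - p i).

Lemma meetsE A (T : {set 'I_n}) : [exists i, (i \in A) && (i \in T)] = ~~ [disjoint A & T].
Proof. by apply/existsP/pred0Pn. Qed.

Lemma big_PiTS_meet p A S :
  \sum_(T : {set 'I_n} | (T \subset S) && [exists i, (i \in A) && (i \in T)]) PiTS p T S
  = meet_prob p A S.
Proof.
have := big_PiTS p S.
rewrite (bigID (fun T : {set 'I_n} => [exists i, (i \in A) && (i \in T)])) /= => total.
rewrite /meet_prob.
have -> : S :&: A = S :\: (S :\: A) by rewrite setDDr setDv set0U.
rewrite -{1}total -big_PiTS_subset ?subsetDl //.
rewrite [X in _ - X](eq_bigl (fun T : {set 'I_n} =>
  (T \subset S) && ~~ [exists i, (i \in A) && (i \in T)])).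
  by rewrite addrK.
by move=> T; rewrite meetsE negbK subsetD disjoint_sym.
Qed.

Lemma rel_ext_v_FC m (Auth : 'I_m -> {set 'I_n}) (w : 'I_m -> R) p S :
  rel_ext p (v_FC Auth w) S = \sum_(k < m) w k * meet_prob p (Auth k) S.
Proof.
rewrite /rel_ext /v_FC.
under eq_bigr => T _ do rewrite big_distrl /= big_mkcond /=.
rewrite exchange_big /=; apply: eq_bigr => k _.
rewrite -big_PiTS_meet big_mkcondr big_distrr /=; apply: eq_bigr => T _.
by case: ifP => _; rewrite ?mul0r ?mulr0.
Qed.

Lemma meet_probU1 p A S x : x \notin S ->
  meet_prob p A (x |: S) - meet_prob p A S
  = if x \in A then p x * \prod_(i in S :&: A) (1 - p i) else 0.
Proof.
move=> xS; rewrite /meet_prob setIUl; case: ifP => xA.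
  rewrite (setIidPl _); last by rewrite sub1set.
  rewrite big_setU1 /=; last by rewrite inE (negbTE xS).
  ring.
have -> : [set x] :&: A = set0.
  by apply/setP => i; rewrite !inE; case: eqP => // ->; rewrite xA.
by rewrite set0U subrr.
Qed.

Lemma meet_prob_marginal_antitone p q A S x :
  (forall i, p i <= q i <= 1) -> p x = q x -> 0 <= q x -> x \notin S ->
  meet_prob q A (x |: S) - meet_prob q A S
    <= meet_prob p A (x |: S) - meet_prob p A S.
Proof.
move=> pq epx qx0 xS; rewrite !meet_probU1 //; case: ifP => // _.
rewrite epx; apply: ler_wpM2l => //.
apply: ler_prod => i _; have /andP[pqi qi1] := pq i.
by rewrite subr_ge0 qi1 lerB.
Qed.

Lemma notin_preceding (pi : {perm 'I_n}) x : x \notin preceding pi x.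
Proof. by rewrite inE ltnn. Qed.

Lemma shapley_rel_ext_v_FC_antitone m (Auth : 'I_m -> {set 'I_n})
    (w : 'I_m -> R) p q x :
  (forall k, 0 <= w k) -> (forall i, p i <= q i <= 1) -> p x = q x -> 0 <= q x ->
  shapley (rel_ext q (v_FC Auth w)) x <= shapley (rel_ext p (v_FC Auth w)) x.
Proof.
move=> w_ge0 pq epx qx0; rewrite /shapley.
apply: ler_wpM2l; first by rewrite invr_ge0 ler0n.
apply: ler_sum => pi _; rewrite !rel_ext_v_FC -!sumrB.
apply: ler_sum => k _; rewrite -!mulrBr; apply: ler_wpM2l => //.
exact: meet_prob_marginal_antitone (notin_preceding pi x).
Qed.

End ReliabilityExtension.

Theorem theorem6 (R : realFieldType) (n m : nat)
    (Auth : 'I_m -> {set 'I_n}) (w : 'I_m -> R)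
    (hw : forall k, 0 <= w k)
    (x : 'I_n) (pstar : 'I_n -> R)
    (hp : forall i, 0 < pstar i <= 1)
    (Rm : {set 'I_n}) (hR : x \notin Rm) :
  let p := fun j => if j \in Rm then 0 else pstar j in
  shapley (rel_ext pstar (v_FC Auth w)) x <= shapley (rel_ext p (v_FC Auth w)) x.
Proof.
rewrite /=; apply: shapley_rel_ext_v_FC_antitone => //.
- move=> i; have /andP[pi_gt0 ->] := hp i.
  by rewrite andbT; case: ifP => _; [exact: ltW|].
- by rewrite (negbTE hR).
- by have /andP[/ltW] := hp x.
Qed.
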